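(* Let $(G,\mathcal F_\bullet G,\mathfrak R)$ be a filtered Rota–Baxter group. Then for every $n\ge1$ the map $\mathfrak R_n:\mathsf{gr}_nG\to\mathsf{gr}_nG$, $\mathfrak R_n(\bar x)=\overline{\mathfrak R(x)}$ for $x\in\mathcal F_nG$, is well defined and is a group homomorphism of $\mathsf{gr}_nG$.
   Context: For a group $G$ write $(x,y)=xyx^{-1}y^{-1}$; for subgroups $H,K$, $(H,K)$ is the subgroup generated by such commutators with $x\in H,y\in K$. A filtered group $(G,\mathcal F_\bullet G)$ is a group with subgroups $G=\mathcal F_1G\supset\mathcal F_2G\supset\cdots$ such that $(\mathcal F_nG,\mathcal F_mG)\subset\mathcal F_{n+m}G$; then each $\mathcal F_nG$ is normal in $G$ and $\mathsf{gr}_nG=\mathcal F_nG/\mathcal F_{n+1}G$ is an abelian group, written additively ($\bar x+\bar y=\overline{xy}$). A Rota–Baxter group is a group with a map $\mathfrak R$ such that $\mathfrak R(g)\mathfrak R(h)=\mathfrak R(g\mathfrak R(g)h\mathfrak R(g)^{-1})$ for all $g,h$; a filtered Rota–Baxter group is a filtered group with such an $\mathfrak R$ satisfying $\mathfrak R(\mathcal F_nG)\subset\mathcal F_nG$ for all $n\ge1$. *)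

Record group : Type := Group {
  carrier :> Type;
  mul : carrier -> carrier -> carrier;
  inv : carrier -> carrier;
  one : carrier;
  mulA : forall x y z, mul x (mul y z) = mul (mul x y) z;
  mul1g : forall x, mul one x = x;
  mulg1 : forall x, mul x one = x;
  mulVg : forall x, mul (inv x) x = one;
  mulgV : forall x, mul x (inv x) = one
}.

Arguments mul {g}.
Arguments inv {g}.
Arguments one {g}.

Definition comm {G : group} (x y : G) : G :=
  mul (mul (mul x y) (inv x)) (inv y).

Definition is_subgroup {G : group} (H : G -> Prop) : Prop :=
  H one /\ (forall x y, H x -> H y -> H (mul x y)) /\ (forall x, H x -> H (inv x)).

Definition comm_subgroup {G : group} (H K : G -> Prop) (z : G) : Prop :=
  forall L : G -> Prop, is_subgroup L ->
    (forall x y, H x -> K y -> L (comm x y)) -> L z.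

(* A filtration F_1 = G ⊃ F_2 ⊃ ... by subgroups with (F_n,F_m) ⊂ F_{n+m}.
   Only indices n >= 1 are meaningful; F 0 is unconstrained. *)
Definition is_filtration {G : group} (F : nat -> G -> Prop) : Prop :=
  (forall x : G, F 1 x) /\
  (forall n, 1 <= n -> is_subgroup (F n)) /\
  (forall n x, 1 <= n -> F (S n) x -> F n x) /\
  (forall n m z, 1 <= n -> 1 <= m -> comm_subgroup (F n) (F m) z -> F (n + m) z).

Definition is_RotaBaxter {G : group} (R : G -> G) : Prop :=
  forall g h : G, mul (R g) (R h) = R (mul (mul (mul g (R g)) h) (inv (R g))).

Definition is_filtered_RotaBaxter {G : group} (F : nat -> G -> Prop) (R : G -> G) : Prop :=
  is_filtration F /\ is_RotaBaxter R /\
  (forall n x, 1 <= n -> F n x -> F n (R x)).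

(* Equality in gr_n G = F_n / F_{n+1}: for x, y in F_n,
   xbar = ybar  iff  x y^{-1} ∈ F_{n+1}. Addition in gr_n: xbar + ybar = (xy)bar. *)
Definition gr_eq {G : group} (F : nat -> G -> Prop) (n : nat) (x y : G) : Prop :=
  F (S n) (mul x (inv y)).

(** Since [(F 1, F m)] lies in [F (m+1)], which lies in [F m], every [F m] is
    normal.  For [c] in [F m], the Rota–Baxter identity applied to
    [h = (R a)^-1 c R a], again in [F m], reads [R (a c) = R a * R h]; hence
    [R (a c) (R a)^-1] is a conjugate of [R h] and lies in [F m].  With
    [m = n+1] this is the well-definedness of [R_n].  For additivity, the
    Rota–Baxter identity rewrites [R x * R y] as [R (x y c)] with
    [c = (y^-1, R x)], a commutator of elements of [F n] and [F 1], so
    [c] is in [F (n+1)]. *)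

From Stdlib Require Import PeanoNat.
From Corelib Require Import ssreflect.

Section GroupTheory.
Context {G : group}.
Implicit Types x y : G.

Lemma mulKg x y : mul x (mul (inv x) y) = y.
Proof. by rewrite mulA mulgV mul1g. Qed.

Lemma mulVKg x y : mul (inv x) (mul x y) = y.
Proof. by rewrite mulA mulVg mul1g. Qed.

Lemma inv_uniq x y : mul x y = one -> inv x = y.
Proof. by move=> xy1; rewrite -[inv x]mulg1 -xy1 mulVKg. Qed.

Lemma invK x : inv (inv x) = x.
Proof. exact/inv_uniq/mulVg. Qed.

Lemma invM x y : inv (mul x y) = mul (inv y) (inv x).
Proof. by apply: inv_uniq; rewrite -mulA mulKg mulgV. Qed.

End GroupTheory.

Ltac gsimpl :=
  repeat rewrite ?invM ?invK -?mulA ?mulKg ?mulVKg ?mul1g ?mulg1 ?mulgV ?mulVg.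

Section Filtration.
Context {G : group} {F : nat -> G -> Prop} (filtF : is_filtration F).

Lemma filtration_mul n x y : 1 <= n -> F n x -> F n y -> F n (mul x y).
Proof.
by case: filtF => _ [subF _] n1; case: (subF n n1) => _ [mulF _]; apply: mulF.
Qed.

Lemma filtration_inv n x : 1 <= n -> F n x -> F n (inv x).
Proof.
by case: filtF => _ [subF _] n1; case: (subF n n1) => _ [_ invF]; apply: invF.
Qed.

Lemma filtration_comm n m x y :
  1 <= n -> 1 <= m -> F n x -> F m y -> F (n + m) (comm x y).
Proof.
case: filtF => _ [_ [_ commF]] n1 m1 Fx Fy.
by apply: commF => // L _; apply.
Qed.

Lemma filtration_conj n g c : 1 <= n -> F n c -> F n (mul (mul g c) (inv g)).
Proof.
move=> n1 Fc.
have -> : mul (mul g c) (inv g) = mul (comm g c) c by rewrite /comm; gsimpl.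
apply: filtration_mul => //; case: filtF => F1 [_ [downF _]].
by apply: downF => //; apply: (filtration_comm 1 n).
Qed.

Lemma gr_eq_sym n x y : 1 <= n -> gr_eq F n x y -> gr_eq F n y x.
Proof.
rewrite /gr_eq => n1 xy.
by have := filtration_inv (S n) _ (le_S _ _ n1) xy; rewrite invM invK.
Qed.

Lemma gr_eq_mulVl n x y : 1 <= n -> gr_eq F n x y -> F (S n) (mul (inv y) x).
Proof.
rewrite /gr_eq => n1 xy.
by have := filtration_conj (S n) (inv y) _ (le_S _ _ n1) xy; rewrite invK; gsimpl.
Qed.

End Filtration.

Section FilteredRotaBaxter.
Variables (G : group) (F : nat -> G -> Prop) (R : G -> G).
Hypotheses (filtF : is_filtration F) (RB : is_RotaBaxter R).
Hypothesis RF : forall n x, 1 <= n -> F n x -> F n (R x).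

Lemma RotaBaxter_mul_comm x y :
  mul (R x) (R y) = R (mul (mul x y) (comm (inv y) (R x))).
Proof. by rewrite RB /comm; gsimpl. Qed.

Lemma RotaBaxter_coset m a c :
  1 <= m -> F m c -> F m (mul (R (mul a c)) (inv (R a))).
Proof.
move=> m1 Fc; set h := mul (mul (inv (R a)) c) (R a).
have Fh : F m h.
  by have := filtration_conj filtF m (inv (R a)) c m1 Fc; rewrite invK.
have -> : R (mul a c) = mul (R a) (R h) by rewrite RB /h; gsimpl.
exact/filtration_conj/RF.
Qed.

Lemma RotaBaxter_gr_eq n x y :
  1 <= n -> gr_eq F n x y -> gr_eq F n (R x) (R y).
Proof.
move=> n1 xy; have -> : x = mul y (mul (inv y) x) by gsimpl.
apply: RotaBaxter_coset; first exact: le_S.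
exact: (gr_eq_mulVl filtF).
Qed.

Lemma RotaBaxter_gr_additive n x y :
  1 <= n -> F n y -> gr_eq F n (R (mul x y)) (mul (R x) (R y)).
Proof.
move=> n1 Fy; apply: (gr_eq_sym filtF) => //.
rewrite /gr_eq RotaBaxter_mul_comm; apply: RotaBaxter_coset; first exact: le_S.
rewrite -Nat.add_1_r; apply: (filtration_comm filtF) => //.
- exact: (filtration_inv filtF).
- by case: filtF.
Qed.

End FilteredRotaBaxter.

Theorem proposition5p10 (G : group) (F : nat -> G -> Prop) (R : G -> G)
  (HFR : is_filtered_RotaBaxter F R) (n : nat) (hn : 1 <= n) :
  (* R_n lands in gr_n and is well defined on classes *)
  (forall x, F n x -> F n (R x)) /\
  (forall x y, F n x -> F n y -> gr_eq F n x y -> gr_eq F n (R x) (R y)) /\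
  (* R_n (xbar + ybar) = R_n xbar + R_n ybar *)
  (forall x y, F n x -> F n y -> gr_eq F n (R (mul x y)) (mul (R x) (R y))).
Proof.
case: HFR => filtF [RB RF].
split; [|split].
- by move=> x; apply: RF.
- by move=> x y _ _; apply: RotaBaxter_gr_eq.
- by move=> x y _ Fy; apply: RotaBaxter_gr_additive.
Qed.
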